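(* Let $\mathcal{H}$ be a real Hilbert space, $f:\mathcal{H}\to(-\infty,+\infty]$ a proper lower semicontinuous function, and $U:\mathcal{H}\to\mathcal{H}$ an operator with $U(x)\in\mathbf{Prox}_f(x)$ for every $x\in\mathcal{H}$. Consider the statements (1) $\operatorname{range}U=\mathcal{H}$; (2) $f+\tfrac12\|\cdot\|^2$ is convex and continuous. Then (1) implies (2). If moreover $U=\mathrm{s\text{-}Prox}_f$, i.e., $f+\tfrac12\|\cdot-x\|^2$ has a unique minimizer for every $x\in\mathcal{H}$, then (1) and (2) are equivalent.
   Context: $\mathbf{Prox}_f:\mathcal{H}\to2^{\mathcal{H}}$, $x\mapsto\operatorname{argmin}_{y}\big(f(y)+\frac12\|x-y\|^2\big)$; when it is single-valued everywhere, the resulting map $\mathcal{H}\to\mathcal{H}$ is denoted $\mathrm{s\text{-}Prox}_f$. *)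

From HB Require Import structures.
From mathcomp Require Import all_boot all_order all_algebra.
From mathcomp Require Import all_classical all_reals all_analysis.
Set Implicit Arguments. Unset Strict Implicit. Unset Printing Implicit Defensive.
Import Order.TTheory GRing.Theory Num.Theory.
Import numFieldNormedType.Exports.
Local Open Scope classical_set_scope.
Local Open Scope ring_scope.

(* A real Hilbert space: a complete normed space over R whose norm is induced
   by a (symmetric, bilinear) inner product [ip]. *)
Definition is_inner_product (R : realType) (H : completeNormedModType R)
  (ip : H -> H -> R) : Prop :=
  [/\ (forall x y, ip x y = ip y x),
      (forall a x y z, ip (a *: x + y) z = a * ip x z + ip y z) &
      (forall x, `|x| ^+ 2 = ip x x)].

Definition proper_fun (R : realType) (H : Type) (f : H -> \bar R) : Prop :=
  (forall x, f x != -oo%E) /\ (exists x, f x != +oo%E).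

Definition Prox (R : realType) (H : normedModType R) (f : H -> \bar R)
  (x : H) : set H :=
  [set y | forall z, (f y + (2^-1 * `|x - y| ^+ 2)%:E <=
                      f z + (2^-1 * `|x - z| ^+ 2)%:E)%E].

Definition f_plus_half_sq (R : realType) (H : normedModType R)
  (f : H -> \bar R) : H -> \bar R :=
  fun x => (f x + (2^-1 * `|x| ^+ 2)%:E)%E.

Definition convex_ext (R : realType) (H : lmodType R) (g : H -> \bar R) : Prop :=
  forall (x y : H) (t : R), 0 < t -> t < 1 ->
    (g (t *: x + (1 - t) *: y)%R <= t%:E * g x + (1 - t)%:E * g y)%E.

(* continuity of an extended-real-valued function understood as:
   real-valued everywhere and continuous *)
Definition continuous_real_valued (R : realType) (H : topologicalType)
  (g : H -> \bar R) : Prop :=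
  exists h : H -> R, continuous h /\ (forall x, g x = (h x)%:E).

From HB Require Import structures.
From mathcomp Require Import all_boot all_order all_algebra.
From mathcomp Require Import all_classical all_reals all_analysis.
From mathcomp Require Import ring lra.
Import Order.TTheory GRing.Theory Num.Theory.
Import numFieldNormedType.Exports.
Local Open Scope classical_set_scope.
Local Open Scope ring_scope.

Set Implicit Arguments.
Unset Strict Implicit.
Unset Printing Implicit Defensive.

(* Write G := f + 1/2 ||.||^2.  Expanding the square shows that y is in
   Prox_f(x) exactly when x is a subgradient of G at y.  Hence (1) makes G
   finite and subdifferentiable everywhere, so convex; G is lower
   semicontinuous with f, and by Baire's theorem a lower semicontinuous convex
   real function on a Banach space is continuous.  Conversely, a convex
   continuous G, bounded below by G(U 0), has a subgradient at every y: the
   Yosida approximations (y - p)/lam, where p is the proximal point of lam G at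
   y, stay bounded by local boundedness of G, their norms increase as lam
   decreases, so they converge when lam -> 0, and the limit is a subgradient at
   y.  Thus y is in Prox_f(x) for some x, and uniqueness gives y = U x. *)

Lemma ge0_of_perturbed (R : realFieldType) (x q : R) :
  (forall s, 0 < s -> s < 1 -> 0 <= x + s * q) -> 0 <= x.
Proof.
move=> hs; rewrite leNgt; apply/negP => x0.
have q1 : 0 < `|q| + 1 by have := normr_ge0 q; lra.
pose s := Num.min 2^-1 (- x / (`|q| + 1)).
have s0 : 0 < s by rewrite lt_min; apply/andP; split; [lra|apply: divr_gt0; lra].
have s1 : s < 1 by rewrite gt_min; apply/orP; left; lra.
have sq : s * (`|q| + 1) <= - x by rewrite -ler_pdivlMr // ge_min lexx orbT.
have := ler_wpM2l (ltW s0) (ler_norm q); have := hs s s0 s1; nra.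
Qed.

Lemma cvg_le_vanishing (R : realType) (u v : R^nat) (l c : R) :
  u @ \oo --> l -> v @ \oo --> 0 -> (forall n, u n <= c + v n) -> l <= c.
Proof.
move=> ul v0 uv.
have ul' : (fun n => u n - v n) @ \oo --> l - 0 by apply: cvgB.
rewrite subr0 in ul'; rewrite -(cvg_lim _ ul') //.
apply: limr_le; first by apply/cvg_ex; exists l.
by apply: nearW => n; have := uv n; lra.
Qed.

Lemma lower_semicontinuousD_continuous (R : realType) (X : topologicalType)
    (f : X -> \bar R) (g : X -> R) :
  lower_semicontinuous f -> continuous g ->
  lower_semicontinuous (fun x => (f x + (g x)%:E)%E).
Proof.
move=> flsc gc x a afg.
have [b bf ab] : exists2 b, (b%:E < f x)%E & a < b + g x.
  move: afg; case: (f x) => [r| |] //=; last first.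
    by move=> _; exists (a - g x + 1); [exact: ltry|lra].
  rewrite -EFinD lte_fin => ar.
  by exists ((r + a - g x) / 2); [rewrite lte_fin|]; lra.
have [V xV Vf] := flsc x b bf.
have /cvgrPdist_lt gnear := gc x; have ab0 : 0 < b + g x - a by lra.
exists (V `&` [set y | `|g x - g y| < b + g x - a]).
  exact: filterI xV (gnear _ ab0).
move=> y [/Vf bfy /=]; rewrite ltr_distlC => /andP[gy _].
apply: (@lt_le_trans _ _ (b%:E + (g y)%:E)%E); first by rewrite -EFinD lte_fin; lra.
by rewrite leeD2r // ltW.
Qed.

Section NormedSpace.
Context {R : realType} {H : normedModType R}.

Definition convex_real (G : H -> R) := forall a b t, 0 < t -> t < 1 ->
  G (t *: a + (1 - t) *: b) <= t * G a + (1 - t) * G b.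

Definition prox_objective (G : H -> R) (lam : R) (y z : H) :=
  lam * G z + 2^-1 * `|z - y| ^+ 2.

Lemma convex_ub_ball_reflect (G : H -> R) (a y : H) (r M : R) : convex_real G ->
  (forall z, `|a - z| < r -> G z <= M) ->
  forall u, `|u| < r / 2 -> G (y + u) <= 2^-1 * G (2 *: y - a) + 2^-1 * M.
Proof.
move=> Gcvx aM u ur; have half : (1 - 2^-1 : R) = 2^-1 by field.
have -> : y + u = 2^-1 *: (2 *: y - a) + (1 - 2^-1) *: (a + 2 *: u).
  by rewrite half -scalerDr addrA subrK scalerDr !scalerA mulVf ?scale1r.
apply: le_trans (Gcvx _ _ _ _ _) _; [lra|lra|].
rewrite half lerD2l ler_wpM2l //; apply: aM.
rewrite opprD addrA subrr sub0r normrN normrZ ger0_norm //; lra.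
Qed.

Lemma convex_bounded_near_lt (G : H -> R) (y : H) (r M e : R) :
  convex_real G -> 0 < r -> 0 < e ->
  (forall u, `|u| < r -> G (y + u) <= M) -> \forall z \near y, G z < G y + e.
Proof.
move=> Gcvx r0 e0 yM.
pose K := `|M - G y| + 1.
have K0 : 0 < K by have := normr_ge0 (M - G y); rewrite /K; lra.
have MK : M - G y <= K by have := ler_norm (M - G y); rewrite /K; lra.
pose d := Num.min (r / 2) (e * r / (2 * K)).
have d0 : 0 < d.
  by rewrite lt_min; apply/andP; split; [lra|apply: divr_gt0; [exact: mulr_gt0|lra]].
apply/nbhs_ballP; exists d => // z; rewrite -ball_normE /= distrC.
have [->|zy] := eqVneq z y; first by lra.
pose t := `|z - y|; rewrite -/t lt_min => /andP[tr te].
have t0 : 0 < t by rewrite normr_gt0 subr_eq0.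
pose s := 2 * t / r.
have s0 : 0 < s by apply: divr_gt0 => //; lra.
have sr : s * r = 2 * t by rewrite /s divfK // gt_eqF.
have s1 : s < 1 by rewrite -(ltr_pM2r r0) sr; lra.
have sK : s * K < e.
  rewrite -(ltr_pM2r r0) mulrAC sr; move: te; rewrite ltr_pdivlMr; lra.
pose u := s^-1 *: (z - y).
have ur : `|u| < r.
  have st : s^-1 * t = r / 2 by rewrite /s; field; rewrite !gt_eqF.
  by rewrite normrZ ger0_norm ?invr_ge0 ?ltW // -/t st; lra.
have -> : z = s *: (y + u) + (1 - s) *: y.
  rewrite scalerDr scalerA mulfV ?gt_eqF // scale1r scalerBl scale1r.
  by rewrite addrAC [s *: y + _]addrC subrK addrC subrK.
apply: le_lt_trans (Gcvx _ _ _ s0 s1) _.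
have := ler_wpM2l (ltW s0) (le_trans (lerB (yM u ur) (lexx _)) MK); nra.
Qed.

Lemma cvg_sqr_norm {T : Type} {F : set_system T} {FF : Filter F}
    (w : T -> H) (l : H) :
  w @ F --> l -> (fun t => `|w t| ^+ 2) @ F --> `|l| ^+ 2.
Proof.
by move=> /cvg_norm wl; under eq_fun do rewrite expr2; rewrite expr2; exact: cvgM.
Qed.

Lemma prox_point_sqr_dist_le (G : H -> R) (m lam : R) (y p : H) :
  (forall z, m <= G z) -> 0 <= lam ->
  (forall z, prox_objective G lam y p <= prox_objective G lam y z) ->
  `|p - y| ^+ 2 <= 2 * lam * (G y - m).
Proof.
move=> Gm lam0 pmin; have := ler_wpM2l lam0 (Gm p).
have := pmin y; rewrite /prox_objective subrr normr0 expr0n /= mulr0 addr0.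
by rewrite -mulrA mulrBr; lra.
Qed.

Lemma cauchy_sqr_dist_le (z : H^nat) (b : R^nat) : b @ \oo --> 0 ->
  (forall N n, (N <= n)%N -> `|z N - z n| ^+ 2 <= b N) -> cauchy (z @ \oo).
Proof.
move=> b0 zb; apply: cauchy_exP => e e0.
have /cvgrPdist_lt /(_ (e ^+ 2) (exprn_gt0 2 e0)) [N _ bN] := b0.
exists (z N), N => // n /= Nn; rewrite -ball_normE /=.
have := bN N (leqnn N); rewrite /= sub0r normrN => bNe.
have := le_lt_trans (zb N n Nn) (le_lt_trans (ler_norm _) bNe).
by have := normr_ge0 (z N - z n); nra.
Qed.

Lemma cauchy_sqr_norm_increments (a : H^nat) (L : R) : (forall n, `|a n| <= L) ->
  (forall n m, (n < m)%N -> `|a m - a n| ^+ 2 <= `|a m| ^+ 2 - `|a n| ^+ 2) ->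
  cauchy (a @ \oo).
Proof.
move=> aL inc; pose sq n := `|a n| ^+ 2.
have sq_nd : nondecreasing_seq sq.
  move=> n m; rewrite leq_eqVlt => /orP[/eqP -> //|nm].
  by have := inc n m nm; have := sqr_ge0 `|a m - a n|; rewrite /sq; lra.
have sq_ub : has_ubound (range sq).
  have L0 : 0 <= L := le_trans (normr_ge0 _) (aL 0%N).
  by exists (L ^+ 2) => _ [n _ <-]; rewrite /sq lerXn2r ?nnegrE.
have sq_cvg := nondecreasing_cvgn sq_nd sq_ub.
set ell := sup (range sq) in sq_cvg.
have sq_le n : sq n <= ell by apply: ub_le_sup => //; exists n.
apply: (@cauchy_sqr_dist_le _ (fun N => ell - sq N)).
  by rewrite -(subrr ell); apply: cvgB => //; exact: cvg_cst.
move=> N n; rewrite leq_eqVlt => /orP[/eqP <-|Nn].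
  by rewrite subrr normr0 expr0n subr_ge0.
by rewrite distrC; apply: le_trans (inc N n Nn) (lerB (sq_le n) (lexx _)).
Qed.

End NormedSpace.

Section BanachSpace.
Context {R : realType} {H : completeNormedModType R}.

(* Otherwise each open set [n < G] is dense, and Baire's theorem gives a point
   lying in all of them. *)
Lemma lsc_bounded_on_ball (G : H -> R) : lower_semicontinuous (fun z => (G z)%:E) ->
  exists a r M, 0 < r /\ forall z, `|a - z| < r -> G z <= M.
Proof.
move=> Glsc; apply: contrapT => unbounded.
pose F (n : nat) := [set z | n%:R < G z].
have F_open_dense n : open (F n) /\ dense (F n).
  split.
    have := (lower_semicontinuousP _).1 Glsc n%:R.
    by congr open; apply/seteqP; split => z /=; rewrite lte_fin.
  move=> V [v Vv] oV; apply: contrapT => VF.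
  have /nbhs_ballP[e e0 ve] : nbhs v V by rewrite openE in oV; exact: oV.
  apply: unbounded; exists v, e, n%:R; split => // z vz.
  rewrite leNgt; apply/negP => Gz; apply: VF; exists z; split => //.
  by apply: ve; rewrite -ball_normE.
have [|z [_ Fz]] := Baire F_open_dense (O := setT) _ openT; first by exists 0.
have := Fz (Num.Def.trunc (G z)).+1 I.
by rewrite /F /= ltNge (ltW (truncnS_gt _)).
Qed.

Lemma convex_lsc_continuous (G : H -> R) :
  convex_real G -> lower_semicontinuous (fun z => (G z)%:E) -> continuous G.
Proof.
move=> Gcvx Glsc y; apply/cvgrPdist_lt => e e0.
have [a [r [M [r0 aM]]]] := lsc_bounded_on_ball Glsc.
have Gup := convex_bounded_near_lt Gcvx (divr_gt0 r0 (ltr0Sn _ 1)) e0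
  (convex_ub_ball_reflect y Gcvx aM).
have [V yV VG] := Glsc y (G y - e) ltac:(rewrite lte_fin; lra).
apply: filterS2 yV Gup => z /VG; rewrite lte_fin => Gz Gz'.
by rewrite ltr_distlC; apply/andP; split; lra.
Qed.

Lemma strongly_midconvex_minimizer (Phi : H -> R) (c m : R) :
  continuous Phi -> 0 < c -> (forall z, m <= Phi z) ->
  (forall a b,
    Phi (2^-1 *: (a + b)) <= 2^-1 * (Phi a + Phi b) - c * `|a - b| ^+ 2) ->
  exists p, forall z, Phi p <= Phi z.
Proof.
move=> Phic c0 Phim mid.
have infE : has_inf (range Phi).
  by split; [exists (Phi 0), 0|exists m => _ [z _ <-]].
pose inf_Phi := inf (range Phi).
have inf_le z : inf_Phi <= Phi z by apply: (ge_inf infE.2); exists z.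
have /choice[zs zs_min] : forall n, exists z, Phi z < inf_Phi + harmonic n.
  by move=> n; have [_ [z _ <-] ?] := inf_adherent (harmonic_gt0 n) infE; exists z.
have /cauchy_cvg/cvg_ex[p zs_p] : cauchy (zs @ \oo).
  apply: (@cauchy_sqr_dist_le _ _ _ (fun N => c^-1 * harmonic N)).
    by rewrite -(mulr0 c^-1); apply: cvgM; [exact: cvg_cst|exact: cvg_harmonic].
  move=> N n Nn; rewrite -(ler_pM2l c0) mulVKf ?gt_eqF //.
  have hNn : harmonic n <= harmonic N :> R.
    by rewrite /= lef_pV2 ?posrE ?ltr0Sn ?ler_nat.
  have := mid (zs N) (zs n); have := inf_le (2^-1 *: (zs N + zs n)).
  by have := zs_min N; have := zs_min n; lra.
exists p => z.
apply: (cvg_le_vanishing (u := Phi \o zs)) (@cvg_harmonic R) _ => [|n].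
  exact: continuous_cvg (Phic p) zs_p.
by apply/ltW/(lt_le_trans (zs_min n)); rewrite lerD2r inf_le.
Qed.

End BanachSpace.

Section InnerProduct.
Context {R : realType} {H : completeNormedModType R}.
Variable ip : H -> H -> R.
Hypothesis Hip : is_inner_product ip.

Lemma ipC x y : ip x y = ip y x. Proof. by case: Hip. Qed.

Lemma ipZDl a x y z : ip (a *: x + y) z = a * ip x z + ip y z.
Proof. by case: Hip. Qed.

Lemma sqr_norm_ip x : `|x| ^+ 2 = ip x x. Proof. by case: Hip. Qed.

Lemma ipDl x y z : ip (x + y) z = ip x z + ip y z.
Proof. by rewrite -[x in LHS]scale1r ipZDl mul1r. Qed.

Lemma ip0l z : ip 0 z = 0.
Proof. by have := ipDl 0 0 z; rewrite addr0; lra. Qed.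

Lemma ipZl a x z : ip (a *: x) z = a * ip x z.
Proof. by rewrite -[_ *: x]addr0 ipZDl ip0l addr0. Qed.

Lemma ipNl x z : ip (- x) z = - ip x z.
Proof. by rewrite -scaleN1r ipZl mulN1r. Qed.

Lemma ipBl x y z : ip (x - y) z = ip x z - ip y z.
Proof. by rewrite ipDl ipNl. Qed.

Lemma ipDr x y z : ip z (x + y) = ip z x + ip z y.
Proof. by rewrite ipC ipDl (ipC x) (ipC y). Qed.

Lemma ipZr a x z : ip z (a *: x) = a * ip z x.
Proof. by rewrite ipC ipZl ipC. Qed.

Lemma ipNr x z : ip z (- x) = - ip z x.
Proof. by rewrite ipC ipNl ipC. Qed.

Lemma ipBr x y z : ip z (x - y) = ip z x - ip z y.
Proof. by rewrite ipDr ipNr. Qed.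

Lemma ip0r z : ip z 0 = 0.
Proof. by rewrite ipC ip0l. Qed.

Lemma sqr_normD u v : `|u + v| ^+ 2 = `|u| ^+ 2 + 2 * ip u v + `|v| ^+ 2.
Proof. by rewrite !sqr_norm_ip ipDl !ipDr (ipC v u); ring. Qed.

Lemma sqr_normB u v : `|u - v| ^+ 2 = `|u| ^+ 2 - 2 * ip u v + `|v| ^+ 2.
Proof. by rewrite sqr_normD ipNr normrN; ring. Qed.

Lemma cvg_ip {T : Type} {F : set_system T} {FF : Filter F} (u v : T -> H) (a b : H) :
  u @ F --> a -> v @ F --> b -> (fun t => ip (u t) (v t)) @ F --> ip a b.
Proof.
move=> ua vb.
have polar x y : ip x y = 2^-1 * (`|x + y| ^+ 2 - `|x| ^+ 2 - `|y| ^+ 2).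
  by rewrite sqr_normD; field.
rewrite polar; under eq_fun do rewrite polar.
apply: cvgM; first exact: cvg_cst.
by apply: cvgB; [apply: cvgB|]; apply: cvg_sqr_norm => //; exact: cvgD.
Qed.

Definition subgradient (G : H -> R) (p x : H) := forall z, G p + ip (z - p) x <= G z.

Lemma subgradient_convex (G : H -> R) :
  (forall p, exists x, subgradient G p x) -> convex_real G.
Proof.
move=> Gsub a b t t0 t1; set w := t *: a + (1 - t) *: b.
have [x wx] := Gsub w; have := wx a; have := wx b.
have : t * ip (a - w) x + (1 - t) * ip (b - w) x = 0.
  rewrite -!ipZl -ipDl !scalerBr addrACA -opprD -scalerDl [t + _]addrC subrK.
  by rewrite scale1r subrr ip0l.
nra.
Qed.

Lemma subgradient_monotone (G : H -> R) (p q a b : H) :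
  subgradient G p a -> subgradient G q b -> 0 <= ip (p - q) (a - b).
Proof. by move=> pa qb; have := pa q; have := qb p; rewrite !(ipBl, ipBr); lra. Qed.

Lemma resolvent_sqr_dist_le (G : H -> R) (y a b : H) (l m : R) : 0 < l -> l < m ->
  subgradient G (y - l *: a) a -> subgradient G (y - m *: b) b ->
  `|a - b| ^+ 2 <= `|a| ^+ 2 - `|b| ^+ 2.
Proof.
move=> l0 lm ya yb.
have := subgradient_monotone ya yb; have := sqr_ge0 `|a - b|.
rewrite !sqr_normB !(ipBl, ipBr, ipZl, ipZr) !sqr_norm_ip.
rewrite (ipC b a) (ipC y b) (ipC y a).
set P := ip a a; set Q := ip b b; set X := ip a b => ab mon.
have : 0 <= (m - l) * (X - Q) by nra.
by rewrite pmulr_rge0 ?subr_gt0 //; lra.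
Qed.

Lemma subgradient_norm_le (G : H -> R) (p x : H) (rho M : R) :
  subgradient G p x -> 0 < rho -> (forall z, `|z - p| <= rho -> G z <= M) ->
  rho * `|x| <= M - G p.
Proof.
move=> px rho0 pM.
have [->|x0] := eqVneq x 0.
  by rewrite normr0 mulr0 subr_ge0 pM // subrr normr0 ltW.
have nx0 : 0 < `|x| by rewrite normr_gt0.
pose z := p + (rho / `|x|) *: x.
have zp : z - p = (rho / `|x|) *: x by rewrite addrC addKr.
have zpr : `|z - p| <= rho.
  by rewrite zp normrZ ger0_norm ?divfK ?gt_eqF // divr_ge0 // ltW.
have := px z; rewrite zp ipZl -sqr_norm_ip expr2 mulrA divfK ?gt_eqF //.
by have := pM z zpr; lra.
Qed.

Lemma subgradient_cvg (G : H -> R) (p a : H^nat) (y x : H) : continuous G ->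
  p @ \oo --> y -> a @ \oo --> x -> (forall n, subgradient G (p n) (a n)) ->
  subgradient G y x.
Proof.
move=> Gc py ax pa z.
have lhs_cvg : (fun n => G (p n) + ip (z - p n) (a n)) @ \oo --> G y + ip (z - y) x.
  apply: cvgD; first exact: continuous_cvg (Gc y) py.
  by apply: cvg_ip => //; apply: cvgB => //; exact: cvg_cst.
apply: (cvg_le_vanishing lhs_cvg (cvg_cst 0)) => n.
by rewrite addr0; exact: pa.
Qed.

Lemma prox_objective_midpoint (G : H -> R) (lam : R) (y a b : H) :
  convex_real G -> 0 <= lam ->
  prox_objective G lam y (2^-1 *: (a + b)) <=
  2^-1 * (prox_objective G lam y a + prox_objective G lam y b)
  - 8^-1 * `|a - b| ^+ 2.
Proof.
move=> Gcvx lam0.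
have Gmid : G (2^-1 *: (a + b)) <= 2^-1 * G a + 2^-1 * G b.
  have half : (1 - 2^-1 : R) = 2^-1 by field.
  by have := Gcvx a b 2^-1 ltac:(lra) ltac:(lra); rewrite half scalerDr.
have := ler_wpM2l lam0 Gmid; rewrite /prox_objective !sqr_norm_ip.
rewrite !(ipBl, ipBr, ipZl, ipZr, ipDl, ipDr, ipNl, ipNr).
by rewrite (ipC b a) (ipC y a) (ipC y b); lra.
Qed.

Lemma prox_point_subgradient (G : H -> R) (lam : R) (y p : H) :
  convex_real G -> 0 < lam ->
  (forall z, prox_objective G lam y p <= prox_objective G lam y z) ->
  subgradient G p (lam^-1 *: (y - p)).
Proof.
move=> Gcvx lam0 pmin z; rewrite ipZr.
suff hB : ip (z - p) (y - p) <= lam * (G z - G p).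
  have lamV : 0 <= lam^-1 by rewrite invr_ge0 ltW.
  by have := ler_wpM2l lamV hB; rewrite mulKf ?gt_eqF //; lra.
rewrite -subr_ge0; apply: ge0_of_perturbed (2^-1 * `|z - p| ^+ 2) _ => s s0 s1.
have := pmin (s *: z + (1 - s) *: p); have := Gcvx z p s s0 s1.
have -> : s *: z + (1 - s) *: p = p + s *: (z - p).
  by rewrite scalerBl scale1r scalerBr addrCA.
rewrite /prox_objective addrAC (sqr_normD (p - y)) ipZr normrZ exprMn.
rewrite ger0_norm ?(ltW s0) //.
have -> : ip (p - y) (z - p) = - ip (z - p) (y - p) by rewrite ipC -ipNr opprB.
set B := ip (z - p) (y - p); set Q := `|z - p| ^+ 2; set Gw := G _ => Gw_le pmin_s.
have : 0 <= s * (lam * (G z - G p) - B + s * (2^-1 * Q)).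
  by have := ler_wpM2l (ltW lam0) Gw_le; nra.
by rewrite pmulr_rge0.
Qed.

Lemma Prox_subgradient (f : H -> \bar R) (G : H -> R) :
  (forall z, f z = (G z - 2^-1 * `|z| ^+ 2)%:E) ->
  forall x y, Prox f x y <-> subgradient G y x.
Proof.
move=> fE x y.
have expand z : (f z + (2^-1 * `|x - z| ^+ 2)%:E)%E =
    (G z - ip z x + 2^-1 * `|x| ^+ 2)%:E.
  by rewrite fE -EFinD sqr_normB (ipC x); congr EFin; field.
by split=> yx z; have := yx z; rewrite ?expand lee_fin ?lerD2r ipBl; lra.
Qed.

Lemma prox_point_exists (G : H -> R) (m lam : R) (y : H) :
  convex_real G -> continuous G -> (forall z, m <= G z) -> 0 < lam ->
  exists p, forall z, prox_objective G lam y p <= prox_objective G lam y z.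
Proof.
move=> Gcvx Gc Gm lam0.
apply: (@strongly_midconvex_minimizer _ _ _ 8^-1 (lam * m)) => //.
- move=> z; apply: cvgD; first exact: cvgM (cvg_cst _) (Gc z).
  apply: cvgM; first exact: cvg_cst.
  by apply: cvg_sqr_norm; apply: cvgB => //; exact: cvg_cst.
- by move=> z; rewrite /prox_objective; have := ler_wpM2l (ltW lam0) (Gm z);
    have := sqr_ge0 `|z - y|; lra.
- by move=> a b; apply: prox_objective_midpoint => //; exact: ltW.
Qed.

Lemma convex_continuous_subgradient_exists (G : H -> R) (m : R) :
  convex_real G -> continuous G -> (forall z, m <= G z) ->
  forall y, exists x, subgradient G y x.
Proof.
move=> Gcvx Gc Gm y.
have [del del0 Gy1] :
    exists2 del, 0 < del & forall z, `|z - y| < del -> G z <= G y + 1.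
  have /cvgrPdist_lt/(_ 1 ltr01)/nbhs_ballP[d d0 yd] := Gc y.
  exists d => // z zy; have := yd z; rewrite -ball_normE /= distrC => /(_ zy).
  by rewrite ltr_distlC => /andP[_ /ltW].
pose rho := del / 2; pose K := G y - m + 1.
have rho0 : 0 < rho by rewrite divr_gt0.
have del_rho : del = rho + rho by rewrite /rho; field.
have K0 : 0 < K by have := Gm y; rewrite /K; lra.
pose c := rho ^+ 2 / (4 * K); pose lam n := c * harmonic n.
have c0 : 0 < c by rewrite divr_gt0 ?exprn_gt0 //; lra.
have cK : c * K = rho ^+ 2 / 4 by rewrite /c; field; rewrite gt_eqF.
have lam0 n : 0 < lam n by rewrite mulr_gt0 ?harmonic_gt0.
have lam_lt n k : (n < k)%N -> lam k < lam n.
  by move=> nk; rewrite ltr_pM2l // /= ltf_pV2 ?posrE ?ltr0Sn ?ltr_nat.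
have lam_le n : lam n <= c by rewrite ger_pMr // /= invf_le1 ?ler1n ?ltr0Sn.
have lam_cvg : lam @ \oo --> 0.
  by rewrite -(mulr0 c); apply: cvgM; [exact: cvg_cst|exact: cvg_harmonic].
have /choice[p pmin] n := prox_point_exists y Gcvx Gc Gm (lam0 n).
pose a n := (lam n)^-1 *: (y - p n).
have pE n : p n = y - lam n *: a n.
  by rewrite /a scalerA mulfV ?gt_eqF // scale1r opprB addrC subrK.
have pa n : subgradient G (p n) (a n).
  exact: prox_point_subgradient Gcvx (lam0 n) (pmin n).
have py n : `|p n - y| < rho.
  have := prox_point_sqr_dist_le Gm (ltW (lam0 n)) (pmin n).
  have : lam n * (G y - m) <= c * K.
    by rewrite ler_pM ?(ltW (lam0 n)) ?subr_ge0 ?Gm //= /K lerDl.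
  rewrite -(ltr_pXn2r (_ : 0 < 2)%N) ?nnegrE ?(ltW rho0) //.
  by have := exprn_gt0 2 rho0; lra.
have a_le n : rho * `|a n| <= K.
  apply: le_trans (subgradient_norm_le (M := G y + 1) (pa n) rho0 _) _.
    move=> z zp; apply: Gy1; rewrite -(subrK (p n) z) -addrA.
    by apply: le_lt_trans (ler_normD _ _) _; have := py n; lra.
  by have := Gm (p n); rewrite /K; lra.
have /cauchy_cvg/cvg_ex[x ax] : cauchy (a @ \oo).
  apply: (@cauchy_sqr_norm_increments _ _ _ (K / rho)) => [n|n k nk].
    by rewrite ler_pdivlMr // mulrC.
  apply: (resolvent_sqr_dist_le (G := G) (y := y) (lam0 k) (lam_lt n k nk)).
    by rewrite -pE.
  by rewrite -pE.
exists x; apply: (subgradient_cvg Gc _ ax pa).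
rewrite (funext pE) -[y in _ --> y]subr0; apply: cvgB; first exact: cvg_cst.
by rewrite -(scale0r x); exact: cvgZ.
Qed.

Lemma Prox_surjective_convex_continuous (f : H -> \bar R) :
  proper_fun f -> lower_semicontinuous f -> (forall y, exists x, Prox f x y) ->
  convex_ext (f_plus_half_sq f) /\ continuous_real_valued (f_plus_half_sq f).
Proof.
move=> [fNoo [z0 fz0]] flsc fsurj.
have ffin y : f y \is a fin_num.
  have [x /(_ z0)] := fsurj y; move: (fNoo y) fz0.
  by case: (f z0) => [r0| |] //; case: (f y).
pose G y := fine (f y) + 2^-1 * `|y| ^+ 2.
have fE z : f z = (G z - 2^-1 * `|z| ^+ 2)%:E by rewrite /G addrK fineK.
have fG : f_plus_half_sq f = fun z => (G z)%:E.
  by apply/funext => z; rewrite /f_plus_half_sq fE -EFinD subrK.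
have Gcvx : convex_real G.
  apply: subgradient_convex => y.
  by have [x /(Prox_subgradient fE)] := fsurj y; exists x.
have Glsc : lower_semicontinuous (fun z => (G z)%:E).
  rewrite -fG; apply: lower_semicontinuousD_continuous flsc _ => z.
  by apply: cvgM; [exact: cvg_cst|exact: cvg_sqr_norm].
split; last by exists G; split; [exact: convex_lsc_continuous Gcvx Glsc|rewrite fG].
by move=> a b t t0 t1; rewrite fG -!EFinM -EFinD lee_fin; exact: Gcvx.
Qed.

Lemma convex_continuous_Prox_surjective (f : H -> \bar R) (p0 : H) : Prox f 0 p0 ->
  convex_ext (f_plus_half_sq f) -> continuous_real_valued (f_plus_half_sq f) ->
  forall y, exists x, Prox f x y.
Proof.
move=> p0min fcvx [G [Gc fG]].
have fE z : f z = (G z - 2^-1 * `|z| ^+ 2)%:E.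
  move: (fG z); rewrite /f_plus_half_sq.
  by case: (f z) => [r| |] //= [<-]; rewrite addrK.
have Gcvx : convex_real G.
  move=> a b t t0 t1; have := fcvx a b t t0 t1.
  by rewrite !fG -!EFinM -EFinD lee_fin.
have Gmin z : G p0 <= G z.
  by have := (Prox_subgradient fE 0 p0).1 p0min z; rewrite ip0r addr0.
move=> y; have [x yx] := convex_continuous_subgradient_exists Gcvx Gc Gmin y.
by exists x; apply/(Prox_subgradient fE).
Qed.

End InnerProduct.

Theorem proposition2 (R : realType) (H : completeNormedModType R)
  (ip : H -> H -> R) (Hip : is_inner_product ip)
  (f : H -> \bar R) (fprop : proper_fun f) (flsc : lower_semicontinuous f)
  (U : H -> H) (hU : forall x, Prox f x (U x)) :
  ((range U = setT) ->
     convex_ext (f_plus_half_sq f) /\ continuous_real_valued (f_plus_half_sq f))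
  /\
  ((forall x, exists! y, Prox f x y) ->
     ((range U = setT) <->
      (convex_ext (f_plus_half_sq f) /\
       continuous_real_valued (f_plus_half_sq f)))).
Proof.
have Prox_surj : range U = setT -> forall y, exists x, Prox f x y.
  move=> UT y; have [x _ <-] : range U y by rewrite UT.
  by exists x.
have conv_cont UT := Prox_surjective_convex_continuous Hip fprop flsc (Prox_surj UT).
split=> [//|Prox_uniq]; split=> [//|[fcvx fcont]].
apply/seteqP; split=> // y _.
have [x yx] := convex_continuous_Prox_surjective Hip (hU 0) fcvx fcont y.
have [u [_ uniq]] := Prox_uniq x.
by exists x => //; rewrite -(uniq _ (hU x)) (uniq _ yx).
Qed.
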